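(* If a group $G$ acts specially on a quasi-median graph $X$, then every vertex-stabiliser of this action is trivial.
   Context: A connected simplicial graph $X$ is quasi-median if it contains neither $K_4^-$ (the complete graph on four vertices minus an edge) nor $K_{3,2}$ as an induced subgraph, and satisfies: (triangle condition) for all vertices $a,x,y$ with $x,y$ adjacent and $d(a,x)=d(a,y)$, there is a vertex $z$ adjacent to both $x,y$ with $d(a,z)=d(a,x)-1$; (quadrangle condition) for all vertices $a,x,y,z$ with $z$ adjacent to both $x$ and $y$ and $d(a,x)=d(a,y)=d(a,z)-1$, there is a vertex $w$ adjacent to both $x,y$ with $d(a,w)=d(a,z)-2$. A square is an induced 4-cycle. A hyperplane is an equivalence class of edges for the transitive closure of the relation ''the two edges lie in a common triangle, or are opposite sides of a square''. The sectors of a hyperplane $J$ are the connected components of the graph obtained from $X$ by removing the interiors of all edges of $J$; $\mathscr{S}(J)$ denotes the set of sectors of $J$. The carrier $N(J)$ is the subgraph spanned by the edges of $J$. Two hyperplanes $J_1,J_2$ are transverse if there exist edges $e_1\in J_1$, $e_2 \in J_2$ which are two consecutive sides of a square; two distinct hyperplanes are tangent if they are not transverse and $N(J_1)\cap N(J_2)\neq\emptyset$. For a group $G$ acting by graph automorphisms on $X$, $\mathfrak{S}(J)$ denotes the image of $\mathrm{stab}_G(J)$ in the permutation group of $\mathscr{S}(J)$. The action is hyperplane-special if it is faithful and: (1) for every hyperplane $J$ and every $g\in G$ with $gJ\neq J$, $J$ and $gJ$ are neither transverse nor tangent; (2) for all transverse hyperplanes $J_1,J_2$ and every $g\in G$,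 $J_1$ and $gJ_2$ are not tangent. The action is special if it is hyperplane-special and, for every hyperplane $J$, the action $\mathfrak{S}(J)\curvearrowright\mathscr{S}(J)$ is free. *)

(* graphs and groups may be infinite, so everything is Prop-valued. *)
From Stdlib Require Import Relations Arith.

Set Implicit Arguments.

Section Graphs.
Variable V : Type.
Variable adj : V -> V -> Prop.

Definition simplicial : Prop :=
  (forall x y, adj x y -> adj y x) /\ (forall x, ~ adj x x).

Inductive walk : nat -> V -> V -> Prop :=
| walk0 : forall x, walk 0 x x
| walkS : forall n x z y, adj x z -> walk n z y -> walk (S n) x y.

Definition connected : Prop := forall x y, exists n, walk n x y.

Definition dist (x y : V) (n : nat) : Prop :=
  walk n x y /\ forall m, walk m x y -> n <= m.

Definition induced_K4minus (a b c d : V) : Prop :=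
  c <> d /\ adj a b /\ adj a c /\ adj a d /\ adj b c /\ adj b d /\ ~ adj c d.

Definition induced_K32 (x1 x2 x3 y1 y2 : V) : Prop :=
  x1 <> x2 /\ x1 <> x3 /\ x2 <> x3 /\ y1 <> y2 /\
  adj x1 y1 /\ adj x1 y2 /\ adj x2 y1 /\ adj x2 y2 /\ adj x3 y1 /\ adj x3 y2 /\
  ~ adj x1 x2 /\ ~ adj x1 x3 /\ ~ adj x2 x3 /\ ~ adj y1 y2.

Definition triangle_condition : Prop :=
  forall a x y n, adj x y -> dist a x n -> dist a y n ->
    exists z, adj z x /\ adj z y /\ dist a z (n - 1).

Definition quadrangle_condition : Prop :=
  forall a x y z n, x <> y -> adj z x -> adj z y ->
    dist a x n -> dist a y n -> dist a z (S n) ->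
    exists w, adj w x /\ adj w y /\ dist a w (n - 1).

Definition quasi_median : Prop :=
  simplicial /\ connected /\
  (forall a b c d, ~ induced_K4minus a b c d) /\
  (forall x1 x2 x3 y1 y2, ~ induced_K32 x1 x2 x3 y1 y2) /\
  triangle_condition /\ quadrangle_condition.

Definition square (a b c d : V) : Prop :=
  adj a b /\ adj b c /\ adj c d /\ adj d a /\ a <> c /\ b <> d /\
  ~ adj a c /\ ~ adj b d.

Definition triangle (a b c : V) : Prop := adj a b /\ adj b c /\ adj a c.

(** edges are represented by ordered pairs (darts); same_edge identifies
    the two orientations of an (unordered) edge *)
Definition same_edge (e f : V * V) : Prop :=
  (fst e = fst f /\ snd e = snd f) \/ (fst e = snd f /\ snd e = fst f).

Definition is_side_of_triangle (e : V * V) (a b c : V) : Prop :=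
  same_edge e (a, b) \/ same_edge e (b, c) \/ same_edge e (a, c).

Definition hrel (e f : V * V) : Prop :=
  adj (fst e) (snd e) /\ adj (fst f) (snd f) /\
  ( same_edge e f
  \/ (exists a b c, triangle a b c /\ is_side_of_triangle e a b c /\
                    is_side_of_triangle f a b c)
  \/ (exists a b c d, square a b c d /\ same_edge e (a, b) /\ same_edge f (c, d)) ).

Definition hequiv : relation (V * V) := clos_refl_trans (V * V) hrel.

(** hyperplanes as (symmetric) sets of edges: J x y means the edge {x,y} is in J *)
Definition hyperplane_of (x0 y0 : V) : V -> V -> Prop :=
  fun x y => adj x y /\ hequiv (x0, y0) (x, y).

Definition heq (J1 J2 : V -> V -> Prop) : Prop :=
  forall x y, J1 x y <-> J2 x y.

Definition is_hyperplane (J : V -> V -> Prop) : Prop :=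
  exists x0 y0, adj x0 y0 /\ heq J (hyperplane_of x0 y0).

Definition transverse (J1 J2 : V -> V -> Prop) : Prop :=
  exists a b c d, square a b c d /\ J1 a b /\ J2 b c.

Definition in_carrier (J : V -> V -> Prop) (v : V) : Prop :=
  exists w, J v w \/ J w v.

Definition tangent (J1 J2 : V -> V -> Prop) : Prop :=
  ~ heq J1 J2 /\ ~ transverse J1 J2 /\
  exists v, in_carrier J1 v /\ in_carrier J2 v.

(** u and v lie in the same sector of J: connected in X minus the
    interiors of the edges of J *)
Definition same_sector (J : V -> V -> Prop) : relation V :=
  clos_refl_trans V (fun x y => adj x y /\ ~ J x y).

End Graphs.

Definition is_group (G : Type) (mul : G -> G -> G) (e : G) (inv : G -> G) : Prop :=
  (forall a b c, mul a (mul b c) = mul (mul a b) c) /\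
  (forall a, mul e a = a) /\ (forall a, mul a e = a) /\
  (forall a, mul (inv a) a = e) /\ (forall a, mul a (inv a) = e).

Definition is_graph_action (V : Type) (adj : V -> V -> Prop)
  (G : Type) (mul : G -> G -> G) (e : G) (act : G -> V -> V) : Prop :=
  (forall x, act e x = x) /\
  (forall g h x, act (mul g h) x = act g (act h x)) /\
  (forall g x y, adj x y <-> adj (act g x) (act g y)).

Definition faithful (V G : Type) (e : G) (act : G -> V -> V) : Prop :=
  forall g, (forall x, act g x = x) -> g = e.

Definition himg (V G : Type) (act : G -> V -> V) (g : G) (J : V -> V -> Prop)
  : V -> V -> Prop :=
  fun x y => exists x' y', J x' y' /\ act g x' = x /\ act g y' = y.

Definition hyperplane_special (V : Type) (adj : V -> V -> Prop)
  (G : Type) (e : G) (act : G -> V -> V) : Prop :=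
  faithful e act /\
  (forall J g, is_hyperplane adj J -> ~ heq (himg act g J) J ->
     ~ transverse adj J (himg act g J) /\ ~ tangent adj J (himg act g J)) /\
  (forall J1 J2 g, is_hyperplane adj J1 -> is_hyperplane adj J2 ->
     transverse adj J1 J2 -> ~ tangent adj J1 (himg act g J2)).

(** The action of the image of stab(J) on the sectors of J is free: the
    permutation of sectors induced by g in stab(J) is either the identity
    or has no fixed sector. *)
Definition sector_action_free (V : Type) (adj : V -> V -> Prop)
  (G : Type) (act : G -> V -> V) : Prop :=
  forall J g, is_hyperplane adj J -> heq (himg act g J) J ->
    (exists u, same_sector adj J u (act g u)) ->
    forall v, same_sector adj J v (act g v).

Definition special_action (V : Type) (adj : V -> V -> Prop)
  (G : Type) (e : G) (act : G -> V -> V) : Prop :=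
  hyperplane_special adj e act /\ sector_action_free adj act.

(* Let g fix a vertex x and let y be a neighbour of x, with hyperplane J
   through the edge xy.  Both J and gJ contain x in their carriers, so by
   hyperplane-specialness gJ = J; g then fixes the sector of x, hence by
   freeness every sector of J, in particular the sector of y.  But in a
   quasi-median graph the edges leaving the halfspace {z | d(y,z) < d(x,z)}
   all belong to J, so that halfspace is a union of sectors; it contains y
   and no other neighbour of x, whence gy = y.  By connectivity g fixes
   every vertex, and faithfulness gives g = e. *)

From Stdlib Require Import Relations Arith Wf_nat Lia Classical.
Set Implicit Arguments.

Section Distances.

Variable V : Type.
Variable adj : V -> V -> Prop.
Hypothesis adj_sym : forall x y, adj x y -> adj y x.

Lemma walk_snoc n x y z : walk adj n x y -> adj y z -> walk adj (S n) x z.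
Proof.
  induction 1; intro Hyz; econstructor; eauto using walk0.
Qed.

Lemma walk_rev n x y : walk adj n x y -> walk adj n y x.
Proof.
  induction 1; [constructor | eapply walk_snoc; eauto].
Qed.

Lemma walk_closed (P : V -> Prop) n x y :
  (forall a b, P a -> adj a b -> P b) -> P x -> walk adj n x y -> P y.
Proof.
  intros Hclosed Hx Hw; induction Hw; eauto.
Qed.

Lemma dist_sym x y n : dist adj x y n -> dist adj y x n.
Proof.
  intros [Hw Hmin]; split; [apply walk_rev; exact Hw|].
  intros m Hm; apply Hmin, walk_rev, Hm.
Qed.

Lemma dist_exists x y : connected adj -> exists n, dist adj x y n.
Proof.
  intros Hconn.
  destruct (dec_inh_nat_subset_has_unique_least_element (fun n => walk adj n x y))
    as [n [[Hw Hmin] _]].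
  - intro n; apply classic.
  - apply Hconn.
  - exists n; split; assumption.
Qed.

Lemma dist_unique x y n m : dist adj x y n -> dist adj x y m -> n = m.
Proof.
  intros [Hn Hminn] [Hm Hminm]; apply Hminn in Hm; apply Hminm in Hn; lia.
Qed.

Lemma dist_refl x : dist adj x x 0.
Proof. split; [constructor | intros; lia]. Qed.

Lemma dist0_eq x y : dist adj x y 0 -> x = y.
Proof. intros [Hw _]; inversion Hw; reflexivity. Qed.

Lemma dist_adj x y : (forall a, ~ adj a a) -> adj x y -> dist adj x y 1.
Proof.
  intros Hirr Hxy; split; [econstructor; [exact Hxy | constructor]|].
  intros [|m] Hm; [|lia].
  inversion Hm; subst; exfalso; eapply Hirr; eassumption.
Qed.

Lemma dist_pred x y n : dist adj x y (S n) -> exists z, adj z y /\ dist adj x z n.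
Proof.
  intros Hd; destruct (dist_sym Hd) as [Hw Hmin]; inversion Hw; subst.
  exists z; split; [apply adj_sym; assumption|].
  apply dist_sym; split; [assumption|].
  intros m Hm; assert (S n <= S m) by (apply Hmin; econstructor; eauto); lia.
Qed.

Lemma dist_le_adj x y z n m :
  adj y z -> dist adj x y n -> dist adj x z m -> m <= S n.
Proof. intros Hyz [Hw _] [_ Hmin]; apply Hmin; eapply walk_snoc; eauto. Qed.

Lemma dist_le_adj_base x x' y n m :
  adj x x' -> dist adj x y n -> dist adj x' y m -> m <= S n.
Proof.
  intros Hxx' Hd Hd'; apply dist_sym in Hd; apply dist_sym in Hd'.
  eapply dist_le_adj; eassumption.
Qed.

Lemma dist_far_not_adj x y z n : dist adj x y n -> dist adj x z (S (S n)) -> ~ adj y z.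
Proof.
  intros Hy Hz Hyz; pose proof (dist_le_adj Hyz Hy Hz); lia.
Qed.

Lemma dist_neq x y z n m : dist adj x y n -> dist adj x z m -> n <> m -> y <> z.
Proof. intros Hy Hz Hnm <-; apply Hnm; eapply dist_unique; eassumption. Qed.

End Distances.

Section Hyperplanes.

Variable V : Type.
Variable adj : V -> V -> Prop.
Hypothesis adj_sym : forall x y, adj x y -> adj y x.
Hypothesis adj_irrefl : forall x, ~ adj x x.
Hypothesis adj_connected : connected adj.
Hypothesis adj_triangle : triangle_condition adj.
Hypothesis adj_quadrangle : quadrangle_condition adj.

Lemma triangle_step a x y n : adj x y -> dist adj a x (S n) -> dist adj a y (S n) ->
  exists z, adj z x /\ adj z y /\ dist adj a z n.
Proof.
  intros Hxy Hx Hy; destruct (adj_triangle Hxy Hx Hy) as [z Hz].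
  rewrite Nat.sub_succ, Nat.sub_0_r in Hz; eauto.
Qed.

Lemma quadrangle_step a x y z n : x <> y -> adj z x -> adj z y ->
  dist adj a x (S n) -> dist adj a y (S n) -> dist adj a z (S (S n)) ->
  exists c, adj c x /\ adj c y /\ dist adj a c n.
Proof.
  intros Hxy Hzx Hzy Hx Hy Hz.
  destruct (adj_quadrangle Hxy Hzx Hzy Hx Hy Hz) as [c Hc].
  rewrite Nat.sub_succ, Nat.sub_0_r in Hc; eauto.
Qed.

Lemma hequiv_flip x y a b :
  adj a b -> hequiv adj (x, y) (a, b) -> hequiv adj (x, y) (b, a).
Proof.
  intros Hab H; eapply rt_trans; [exact H|]; apply rt_step.
  repeat split; simpl; auto; left; right; simpl; auto.
Qed.

Lemma hequiv_triangle x y a b c :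
  triangle adj a b c -> hequiv adj (x, y) (a, b) -> hequiv adj (x, y) (a, c).
Proof.
  intros Htri H; eapply rt_trans; [exact H|]; apply rt_step.
  destruct Htri as (Hab & Hbc & Hac).
  repeat split; simpl; auto; right; left; exists a, b, c.
  unfold is_side_of_triangle, same_edge; simpl; repeat split; auto 7.
Qed.

Lemma hequiv_square x y a b c d :
  square adj a b c d -> hequiv adj (x, y) (a, b) -> hequiv adj (x, y) (d, c).
Proof.
  intros Hsq H; eapply rt_trans; [exact H|]; apply rt_step.
  destruct Hsq as (Hab & Hbc & Hcd & Hrest).
  repeat split; simpl; auto; right; right; exists a, b, c, d.
  unfold square, same_edge; simpl; repeat split; tauto.
Qed.

Section CrossingEdges.

Variables v w : V.
Hypothesis adj_vw : adj v w.

Definition crossings_in_hyperplane n p q : Prop :=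
  forall a b, adj a b -> dist adj w a n -> dist adj v a (S n) ->
    dist adj v b p -> dist adj w b q -> hequiv adj (v, w) (a, b).

Lemma crossings_base_opposite : crossings_in_hyperplane 0 0 1.
Proof.
  intros a b Hab Ha _ Hb _; apply dist0_eq in Ha; apply dist0_eq in Hb; subst.
  apply hequiv_flip; [exact adj_vw | apply rt_refl].
Qed.

Lemma crossings_base_equidistant : crossings_in_hyperplane 0 0 0.
Proof.
  intros a b Hab Ha _ _ Hb; apply dist0_eq in Ha; apply dist0_eq in Hb; subst.
  exfalso; exact (adj_irrefl Hab).
Qed.

(* Triangle condition at v: the common neighbour z of a and b is nearer to v. *)
Lemma crossings_far n :
  crossings_in_hyperplane n n (S n) -> crossings_in_hyperplane n n n ->
  crossings_in_hyperplane n (S n) (S n).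
Proof.
  intros Hopp Heq a b Hab Haw Hav Hbv Hbw.
  destruct (triangle_step Hab Hav Hbv) as (z & Hza & Hzb & Hzv).
  destruct (dist_exists w z adj_connected) as [p Hzw].
  pose proof (dist_le_adj (adj_sym Hza) Haw Hzw).
  pose proof (dist_le_adj Hzb Hzw Hbw).
  assert (Haz : hequiv adj (v, w) (a, z)).
  { assert (p = n \/ p = S n) as [-> | ->] by lia.
    - apply Heq; auto.
    - apply Hopp; auto. }
  apply (hequiv_triangle (b := z)); [repeat split; auto | exact Haz].
Qed.

(* Triangle condition at w: the common neighbour z of a and b is nearer to w. *)
Lemma crossings_equidistant_succ n :
  crossings_in_hyperplane n (S n) (S n) ->
  crossings_in_hyperplane (S n) (S n) (S n).
Proof.
  intros Hfar a b Hab Haw Hav Hbv Hbw.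
  destruct (triangle_step Hab Haw Hbw) as (z & Hza & Hzb & Hzw).
  destruct (dist_exists v z adj_connected) as [q Hzv].
  pose proof (dist_le_adj Hza Hzv Hav).
  pose proof (dist_le_adj_base adj_sym (adj_sym adj_vw) Hzw Hzv).
  assert (q = S n) as -> by lia.
  assert (Hzb' : hequiv adj (v, w) (z, b)) by (apply Hfar; auto).
  apply hequiv_flip; [apply adj_sym; exact Hab|].
  apply (hequiv_triangle (b := z)); [repeat split; auto|].
  apply hequiv_flip; auto.
Qed.

(* Step a back towards w to a', then the quadrangle condition at v yields a
   square a' c b a whose side a'c has the profile of the induction hypothesis. *)
Lemma crossings_opposite_succ n :
  crossings_in_hyperplane n n (S n) ->
  crossings_in_hyperplane (S n) (S n) (S (S n)).
Proof.
  intros Hopp a b Hab Haw Hav Hbv Hbw.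
  destruct (dist_pred adj_sym Haw) as (a' & Ha'a & Ha'w).
  destruct (dist_exists v a' adj_connected) as [q Ha'v].
  pose proof (dist_le_adj_base adj_sym (adj_sym adj_vw) Ha'w Ha'v).
  pose proof (dist_le_adj Ha'a Ha'v Hav).
  assert (q = S n) as -> by lia.
  assert (Ha'b : a' <> b) by (apply (dist_neq Ha'w Hbw); lia).
  destruct (quadrangle_step Ha'b (adj_sym Ha'a) Hab Ha'v Hbv Hav)
    as (c & Hca' & Hcb & Hcv).
  destruct (dist_exists w c adj_connected) as [p Hcw].
  pose proof (dist_le_adj (adj_sym Hca') Ha'w Hcw).
  pose proof (dist_le_adj Hcb Hcw Hbw).
  assert (p = S n) as -> by lia.
  assert (Ha'c : hequiv adj (v, w) (a', c)) by (apply Hopp; auto).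
  apply (hequiv_square (a := a') (b := c)); [|exact Ha'c].
  repeat split; auto.
  - apply (dist_neq Hcv Hav); lia.
  - exact (dist_far_not_adj Ha'w Hbw).
  - exact (dist_far_not_adj Hcv Hav).
Qed.

Lemma crossings_all n :
  crossings_in_hyperplane n n (S n) /\ crossings_in_hyperplane n n n /\
  crossings_in_hyperplane n (S n) (S n).
Proof.
  induction n as [|n (Hopp & _ & Hfar)].
  - pose proof crossings_base_opposite; pose proof crossings_base_equidistant.
    repeat split; auto using crossings_far.
  - pose proof (crossings_opposite_succ Hopp).
    pose proof (crossings_equidistant_succ Hfar).
    repeat split; auto using crossings_far.
Qed.

Definition closer_to_w (x : V) : Prop :=
  exists n, dist adj w x n /\ dist adj v x (S n).

Lemma edge_leaving_halfspace_in_hyperplane x y :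
  adj x y -> closer_to_w x -> ~ closer_to_w y -> hequiv adj (v, w) (x, y).
Proof.
  intros Hxy [n [Hxw Hxv]] Hy.
  destruct (dist_exists w y adj_connected) as [p Hyw].
  destruct (dist_exists v y adj_connected) as [q Hyv].
  pose proof (dist_le_adj Hxy Hxw Hyw).
  pose proof (dist_le_adj (adj_sym Hxy) Hyv Hxv).
  pose proof (dist_le_adj_base adj_sym (adj_sym adj_vw) Hyw Hyv).
  assert (q <> S p) by (intros ->; apply Hy; exists p; auto).
  destruct (crossings_all n) as (Hopp & Heq & Hfar).
  assert (Hcases : (q = n /\ p = S n) \/ (q = n /\ p = n) \/ (q = S n /\ p = S n))
    by lia.
  destruct Hcases as [[-> ->] | [[-> ->] | [-> ->]]];
    [apply Hopp | apply Heq | apply Hfar]; auto.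
Qed.

Lemma same_sector_closer_to_w x y :
  same_sector adj (hyperplane_of adj v w) x y -> (closer_to_w x <-> closer_to_w y).
Proof.
  induction 1 as [x y [Hxy HJ] | | ]; [| tauto | tauto].
  split; intro Hin; apply NNPP; intro Hout; apply HJ; split; auto.
  - apply edge_leaving_halfspace_in_hyperplane; auto.
  - apply hequiv_flip; [apply adj_sym; exact Hxy|].
    apply edge_leaving_halfspace_in_hyperplane; auto.
Qed.

Lemma neighbours_in_distinct_sectors u :
  adj v u -> same_sector adj (hyperplane_of adj v w) w u -> u = w.
Proof.
  intros Hvu Hsec.
  assert (Hw : closer_to_w w) by (exists 0; split; [apply dist_refl | apply dist_adj; auto]).
  destruct (proj1 (same_sector_closer_to_w Hsec) Hw) as (n & Huw & Huv).
  assert (S n = 1) by (eapply dist_unique; [exact Huv | apply dist_adj; auto]).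
  assert (n = 0) as -> by lia.
  symmetry; apply dist0_eq with adj; exact Huw.
Qed.

End CrossingEdges.

End Hyperplanes.

Section SpecialActions.

Variable V : Type.
Variable adj : V -> V -> Prop.
Variables (G : Type) (e : G) (act : G -> V -> V).
Hypothesis act_adj : forall g x y, adj x y <-> adj (act g x) (act g y).

Lemma hyperplane_of_is_hyperplane x y : adj x y -> is_hyperplane adj (hyperplane_of adj x y).
Proof. intros Hxy; exists x, y; split; [exact Hxy | intros a b; reflexivity]. Qed.

(* J and gJ share the vertex x = gx of their carriers, so they would be tangent. *)
Lemma fixed_vertex_stabilises_hyperplane g x y :
  hyperplane_special adj e act -> act g x = x -> adj x y ->
  heq (himg act g (hyperplane_of adj x y)) (hyperplane_of adj x y).
Proof.
  intros (_ & Hspecial & _) Hx Hxy.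
  set (J := hyperplane_of adj x y).
  apply NNPP; intro Hneq.
  destruct (Hspecial J g (hyperplane_of_is_hyperplane Hxy) Hneq) as [Htrans Htang].
  apply Htang; repeat split.
  - intro Heq; apply Hneq; intros a b; symmetry; apply Heq.
  - exact Htrans.
  - assert (HJ : J x y) by (split; [exact Hxy | apply rt_refl]).
    exists x; split; [exists y; left; exact HJ|].
    exists (act g y); left; exists x, y; auto.
Qed.

Lemma special_action_fixes_neighbours g x y :
  quasi_median adj -> special_action adj e act ->
  act g x = x -> adj x y -> act g y = y.
Proof.
  intros ([Hsym Hirr] & Hconn & _ & _ & Htri & Hquad) [Hspecial Hfree] Hx Hxy.
  set (J := hyperplane_of adj x y).
  assert (HgJ : heq (himg act g J) J)
    by (apply fixed_vertex_stabilises_hyperplane; assumption).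
  assert (Hsec : same_sector adj J y (act g y)).
  { apply (Hfree J g (hyperplane_of_is_hyperplane Hxy) HgJ).
    exists x; rewrite Hx; apply rt_refl. }
  assert (Hxgy : adj x (act g y)) by (rewrite <- Hx at 1; apply act_adj; exact Hxy).
  exact (neighbours_in_distinct_sectors Hsym Hirr Hconn Htri Hquad Hxy Hxgy Hsec).
Qed.

End SpecialActions.

Theorem lemma3p4 (V : Type) (adj : V -> V -> Prop)
  (G : Type) (mul : G -> G -> G) (e : G) (inv : G -> G) (act : G -> V -> V) :
  is_group mul e inv ->
  quasi_median adj ->
  is_graph_action adj mul e act ->
  special_action adj e act ->
  forall (v : V) (g : G), act g v = v -> g = e.
Proof.
  intros _ Hqm (_ & _ & Hact_adj) Hspecial v g Hv.
  apply (proj1 (proj1 Hspecial)); intro x.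
  destruct (proj1 (proj2 Hqm) v x) as [n Hwalk].
  apply (walk_closed (fun y => act g y = y)) with (2 := Hv) (3 := Hwalk).
  intros a b Ha Hab; eapply special_action_fixes_neighbours; eassumption.
Qed.
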